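(* Let $f:\mathbb{R}^n\to\mathbb{R}$ be convex and continuously differentiable with locally Lipschitz gradient, with $\mathcal{X}^*:=\arg\min f\neq\emptyset$ and optimal value $f^*$. Fix $x^0$, $\alpha_0>0$, $\theta_0>0$, $\tau\ge1$, $0<\omega\le\frac1{\sqrt2}$, $\gamma_k\in[\gamma_{\min},\gamma_{\max}]\subset(0,\infty)$, and generate $x^{k+1}=x^k-\alpha_k\gamma_k\nabla f(x^k)$ with, for $k\ge1$, $L_k:=\frac{\|\nabla f(x^k)-\nabla f(x^{k-1})\|}{\|x^k-x^{k-1}\|}$, $\alpha_k:=\min\{\frac{\alpha_{k-1}\gamma_{k-1}}{\gamma_k}\sqrt{2(1-\omega^2)+\theta_{k-1}/\tau},\frac{\omega}{\gamma_kL_k}\}$, $\theta_k:=\frac{\alpha_k\gamma_k}{\alpha_{k-1}\gamma_{k-1}}$. Let $\eta:=\mathrm{dist}^2(x^0;\mathcal{X}^* )+2\alpha_0^2\gamma_0^2\|\nabla f(x^0)\|^2+2\alpha_0\gamma_0\theta_0(f(x^0)-f^* )$, let $W:=\overline B(0;R)$ with $R>\sqrt\eta+\mathrm{dist}(x^0;\mathcal{X}^* )+\|x^0\|$, and let $L_W>0$ satisfy $\|\nabla f(x)-\nabla f(y)\|\le L_W\|x-y\|$ on $W$. Then: (a) $\min_{1\le k\le N}\|\nabla f(x^k)\|\le\sqrt{\frac{L_W^2\eta}{N\min\{L_W\alpha_0\gamma_0,\omega\}}}$ for all $N\in\mathbb{N}$, and for every $\varepsilon>0$ the first index $N_{\nabla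 f}(\varepsilon)$ with $\|\nabla f(x^k)\|\le\varepsilon$ satisfies $N_{\nabla f}(\varepsilon)\le\Big\lceil1+\frac{L_W^2\eta}{\varepsilon^2\min\{L_W\alpha_0\gamma_0,\omega\}}\Big\rceil$; (b) with $f_N^*:=\min\{f(x^k):0\le k\le N\}$, one has $f_N^*-f^*\le\frac{L_W((R+\|x^0\|)^2+\eta)}{2N\min\{L_W\alpha_0\gamma_0,\omega\}}$ for all $N\in\mathbb{N}$, and for every $\varepsilon>0$ the first index $N_f(\varepsilon)$ with $f(x^k)-f^*\le\varepsilon$ satisfies $N_f(\varepsilon)\le\Big\lceil1+\frac{L_W((R+\|x^0\|)^2+\eta)}{2\varepsilon\min\{L_W\alpha_0\gamma_0,\omega\}}\Big\rceil$.
   Context: This is the adaptive scaled gradient algorithm (AdaSGA). $\overline B(0;R)$ is the closed ball; $\mathrm{dist}(x;S)=\inf_{z\in S}\|z-x\|$. *)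

From HB Require Import structures.
From mathcomp Require Import all_boot all_order all_algebra.
From mathcomp Require Import all_classical all_reals all_analysis.
Set Implicit Arguments. Unset Strict Implicit. Unset Printing Implicit Defensive.
Import Order.TTheory GRing.Theory Num.Theory.
Import numFieldNormedType.Exports.
Local Open Scope classical_set_scope.
Local Open Scope ring_scope.

Definition dotp (R : realType) (n : nat) (u v : 'rV[R]_n) : R :=
  \sum_(i < n) u ord0 i * v ord0 i.

Definition enorm (R : realType) (n : nat) (v : 'rV[R]_n) : R :=
  Num.sqrt (dotp v v).

Definition dist_to (R : realType) (n : nat) (x : 'rV[R]_n) (S : set 'rV[R]_n) : R :=
  inf [set enorm (z - x) | z in S].

Definition argmin (R : realType) (n : nat) (f : 'rV[R]_n -> R) : set 'rV[R]_n :=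
  [set z | forall y, f z <= f y].

Definition econvex (R : realType) (n : nat) (f : 'rV[R]_n -> R) : Prop :=
  forall (x y : 'rV[R]_n) (t : R), 0 <= t -> t <= 1 ->
    f ((1 - t) *: x + t *: y) <= (1 - t) * f x + t * f y.

Definition is_gradient (R : realType) (n : nat) (f : 'rV[R]_n -> R)
  (g : 'rV[R]_n -> 'rV[R]_n) : Prop :=
  forall x, differentiable f x /\ forall h, 'd f x h = dotp (g x) h.

Definition elipschitz_on (R : realType) (n : nat) (g : 'rV[R]_n -> 'rV[R]_n)
  (W : set 'rV[R]_n) (L : R) : Prop :=
  forall x y, W x -> W y -> enorm (g x - g y) <= L * enorm (x - y).

Definition ecball (R : realType) (n : nat) (c : 'rV[R]_n) (r : R) : set 'rV[R]_n :=
  [set x | enorm (x - c) <= r].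

Definition elocally_lipschitz (R : realType) (n : nat) (g : 'rV[R]_n -> 'rV[R]_n) : Prop :=
  forall x, exists r : R, exists L : R, 0 < r /\ elipschitz_on g (ecball x r) L.

(* L_k for k >= 1 (mathcomp convention: u / 0 = 0). *)
Definition Lk (R : realType) (n : nat) (g : 'rV[R]_n -> 'rV[R]_n)
  (x : nat -> 'rV[R]_n) (k : nat) : R :=
  enorm (g (x k) - g (x k.-1)) / enorm (x k - x k.-1).

(* The AdaSGA step-size rule for k >= 1; omega / (gamma_k L_k) is read as
   +oo when L_k = 0, so then the minimum is the first term. *)
Definition adasga_alpha (R : realType) (n : nat) (g : 'rV[R]_n -> 'rV[R]_n)
  (x : nat -> 'rV[R]_n) (alpha theta gamma : nat -> R) (tau omega : R) (k : nat) : R :=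
  let A := alpha k.-1 * gamma k.-1 / gamma k *
           Num.sqrt (2 * (1 - omega ^+ 2) + theta k.-1 / tau) in
  if Lk g x k == 0 then A else Num.min A (omega / (gamma k * Lk g x k)).

(* Write lam k = alpha k * gamma k and c = 1 / (1 - omega^2).  The two branches of the
   step-size rule give lam (k+1) |g (x (k+1)) - g (x k)| <= omega |x (k+1) - x k| and
   lam (k+1)^2 <= lam k^2 (2 (1 - omega^2) + theta k / tau); with convexity they make
     |x (k+1) - xs|^2 + c omega^2 lam k^2 |g (x k)|^2 + lam k (2 + c theta k) (f (x k) - fstar)
   nonincreasing for every minimizer xs, and its initial value is about eta when xs almost
   realizes dist(x 0, argmin f).  So the iterates stay in W, where g is LW-Lipschitz, the
   step sizes stay above min(lam 0, omega / LW), and the first N of them add up to at least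
   N min(LW lam 0, omega) / LW.  Telescoping the Lyapunov inequality bounds this sum times the
   smallest gap f (x k) - fstar, which is (b).  For (a), let G be the smallest |g (x k)|^2: as
   long as the gaps stay above G / (2 LW) the same telescoping applies, and afterwards the
   descent lemma forces lam k <= 1 / LW and a decrease of f by lam k G / 2 at each step.
   The first-hitting-time bounds follow by taking N = ceil (1 + C). *)

From HB Require Import structures.
From mathcomp Require Import all_boot all_order all_algebra.
From mathcomp Require Import all_classical all_reals all_analysis.
From mathcomp Require Import ring lra.
Set Implicit Arguments. Unset Strict Implicit. Unset Printing Implicit Defensive.
Import Order.TTheory GRing.Theory Num.Theory.
Import numFieldNormedType.Exports.
Local Open Scope classical_set_scope.
Local Open Scope ring_scope.

Lemma sqrtrD_le (R : rcfType) (a b : R) : 0 <= a -> 0 <= b ->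
  Num.sqrt (a + b) <= Num.sqrt a + Num.sqrt b.
Proof.
move=> a_ge0 b_ge0; rewrite -(ler_pXn2r (n := 2)) ?nnegrE ?addr_ge0 ?sqrtr_ge0 //.
by rewrite sqrrD !sqr_sqrtr ?addr_ge0 // lerD2r lerDl mulrn_wge0 // mulr_ge0 ?sqrtr_ge0.
Qed.

Lemma ler_sqrt_sqr (R : rcfType) (u a : R) : 0 <= u -> u ^+ 2 <= a -> u <= Num.sqrt a.
Proof. by move=> u_ge0 ua; rewrite -(ger0_norm u_ge0) -sqrtr_sqr ler_wsqrtr. Qed.

Lemma all_ge_or_first_lt (R : realDomainType) (a : nat -> R) (B : R) N :
  (forall k, (1 <= k <= N)%N -> B <= a k) \/
  exists2 j, (j < N)%N & (forall k, (1 <= k <= j)%N -> B <= a k) /\ a j.+1 < B.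
Proof.
elim: N => [|N [all_ge|[j jN first]]]; last by right; exists j => //; exact: ltnW.
  by left => k /andP[k1 k0]; move: (leq_trans k1 k0).
have [B_le|a_lt] := leP B (a N.+1); last by right; exists N.
left => k /andP[k1]; rewrite leq_eqVlt => /orP[/eqP -> //|kN].
by apply: all_ge; rewrite k1.
Qed.

Lemma exists_min_index (R : realDomainType) (a : nat -> R) N : (1 <= N)%N ->
  exists2 k, (1 <= k <= N)%N & forall j, (1 <= j <= N)%N -> a k <= a j.
Proof.
case: N => // N _; elim: N => [|N [k kN k_min]].
  by exists 1%N => // j /andP[j1 j0]; rewrite (@anti_leq j 1) ?j1 ?j0.
have [ak_le|a_lt] := leP (a k) (a N.+2).
  exists k => [|j /andP[j1]]; first by case/andP: kN => -> /leqW.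
  by rewrite leq_eqVlt => /orP[/eqP -> //|jN]; apply: k_min; rewrite j1.
exists N.+2 => [|j /andP[j1]]; first by rewrite /= leqnn.
rewrite leq_eqVlt => /orP[/eqP -> //|jN].
by apply: le_trans (ltW a_lt) (k_min j _); rewrite j1.
Qed.

Lemma first_hit_le_ceil (R : realType) (P : pred nat) (C : R) : 0 <= C ->
  (forall N : nat, (1 <= N)%N -> C <= N%:R -> exists2 k, (k <= N)%N & P k) ->
  exists N, [/\ P N, (forall j, (j < N)%N -> ~ P j) & (N%:Z <= Num.ceil (1 + C))%R].
Proof.
move=> C_ge0 hit; have ceil_ge := ceil_ge (1 + C).
have ceil_ge0 : (0 <= Num.ceil (1 + C))%R.
  by rewrite -(ler_int R); apply: le_trans ceil_ge; lra.
set N := `|Num.ceil (1 + C)|%N.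
have N_eq : N%:Z = Num.ceil (1 + C) by rewrite /N gez0_abs.
have N_ge : 1 + C <= N%:R by rewrite pmulrn N_eq.
have N_ge1 : (1 <= N)%N by rewrite -(@ler_nat R); lra.
have C_le : C <= N%:R by lra.
have [k kN Pk] := hit N N_ge1 C_le.
have [m Pm m_min] := ex_minnP (ex_intro P k Pk).
exists m; split => // [j jm Pj|]; first by have := m_min j Pj; rewrite leqNgt jm.
by rewrite -N_eq lez_nat (leq_trans (m_min k Pk) kN).
Qed.

Section Euclid.
Variables (R : realType) (n : nat).
Implicit Types (u v w : 'rV[R]_n) (a : R).

Lemma dotpC u v : dotp u v = dotp v u.
Proof. by apply: eq_bigr => i _; rewrite mulrC. Qed.

Lemma dotpDl u v w : dotp (u + v) w = dotp u w + dotp v w.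
Proof. by rewrite /dotp -big_split; apply: eq_bigr => i _; rewrite !mxE mulrDl. Qed.

Lemma dotpDr u v w : dotp w (u + v) = dotp w u + dotp w v.
Proof. by rewrite dotpC dotpDl !(dotpC w). Qed.

Lemma dotpZl a u v : dotp (a *: u) v = a * dotp u v.
Proof. by rewrite /dotp mulr_sumr; apply: eq_bigr => i _; rewrite !mxE mulrA. Qed.

Lemma dotpZr a u v : dotp u (a *: v) = a * dotp u v.
Proof. by rewrite dotpC dotpZl dotpC. Qed.

Lemma dotpNl u v : dotp (- u) v = - dotp u v.
Proof. by rewrite -scaleN1r dotpZl mulN1r. Qed.

Lemma dotpNr u v : dotp u (- v) = - dotp u v.
Proof. by rewrite dotpC dotpNl dotpC. Qed.

Lemma dotpBl u v w : dotp (u - v) w = dotp u w - dotp v w.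
Proof. by rewrite dotpDl dotpNl. Qed.

Lemma dotp0l v : dotp 0 v = 0.
Proof. by rewrite /dotp big1 // => i _; rewrite mxE mul0r. Qed.

Lemma dotpp_ge0 v : 0 <= dotp v v.
Proof. by rewrite /dotp sumr_ge0 // => i _; rewrite -expr2 sqr_ge0. Qed.

Lemma dotpp_eq0 v : (dotp v v == 0) = (v == 0).
Proof.
apply/idP/eqP => [|->]; last by rewrite dotp0l.
rewrite psumr_eq0 => [/allP v0|i _]; last by rewrite -expr2 sqr_ge0.
apply/rowP => i; move/implyP: (v0 i (mem_index_enum _)) => /(_ isT).
by rewrite mulf_eq0 orbb mxE => /eqP.
Qed.

Lemma enorm_ge0 v : 0 <= enorm v.
Proof. exact: sqrtr_ge0. Qed.

Lemma enorm_sqr v : enorm v ^+ 2 = dotp v v.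
Proof. by rewrite sqr_sqrtr // dotpp_ge0. Qed.

Lemma enorm_eq0 v : (enorm v == 0) = (v == 0).
Proof. by rewrite sqrtr_eq0 -dotpp_eq0 eq_le dotpp_ge0 andbT. Qed.

Lemma enormN v : enorm (- v) = enorm v.
Proof. by rewrite /enorm dotpNl dotpNr opprK. Qed.

Lemma enormB u v : enorm (u - v) = enorm (v - u).
Proof. by rewrite -enormN opprB. Qed.

Lemma enormZ a v : enorm (a *: v) = `|a| * enorm v.
Proof. by rewrite /enorm dotpZl dotpZr mulrA -expr2 sqrtrM ?sqr_ge0 // sqrtr_sqr. Qed.

Lemma enorm_sqrZ a v : enorm (a *: v) ^+ 2 = a ^+ 2 * enorm v ^+ 2.
Proof. by rewrite enormZ exprMn real_normK // num_real. Qed.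

Lemma enorm_sqrD u v :
  enorm (u + v) ^+ 2 = enorm u ^+ 2 + 2 * dotp u v + enorm v ^+ 2.
Proof. rewrite !enorm_sqr dotpDl !dotpDr (dotpC v u); ring. Qed.

Lemma enorm_sqrB u v :
  enorm (u - v) ^+ 2 = enorm u ^+ 2 - 2 * dotp u v + enorm v ^+ 2.
Proof. rewrite enorm_sqrD dotpNr enormN; ring. Qed.

Lemma cauchy_schwarz u v : dotp u v <= enorm u * enorm v.
Proof.
suff : dotp u v ^+ 2 <= dotp u u * dotp v v.
  rewrite -sqrtrM ?dotpp_ge0 // => uv; apply: le_trans (ler_norm _) _.
  by rewrite -sqrtr_sqr ler_sqrt // mulr_ge0 ?dotpp_ge0.
have [/eqP|v0] := eqVneq (dotp v v) 0.
  by rewrite dotpp_eq0 => /eqP ->; rewrite dotpC !dotp0l expr0n mulr0.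
have vp : 0 < dotp v v by rewrite lt_def v0 dotpp_ge0.
have := dotpp_ge0 (u - (dotp u v / dotp v v) *: v).
rewrite !(dotpBl, dotpDr, dotpNr, dotpZl, dotpZr) (dotpC v u).
set t := dotp u v / dotp v v.
have -> : dotp u u - t * dotp u v + (- (t * dotp u v) - t * - (t * dotp v v))
          = dotp u u - dotp u v ^+ 2 / dotp v v by rewrite /t; field; rewrite gt_eqF.
by rewrite subr_ge0 ler_pdivrMr // mulrC.
Qed.

Lemma enormD u v : enorm (u + v) <= enorm u + enorm v.
Proof.
rewrite -(ler_pXn2r (n := 2)) ?nnegrE ?addr_ge0 ?enorm_ge0 //.
by rewrite enorm_sqrD sqrrD lerD2r lerD2l mulr_natl lerMn2r cauchy_schwarz.
Qed.

Lemma enorm_segment_le u v (r s : R) : enorm u <= r -> enorm v <= r ->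
  0 <= s <= 1 -> enorm (u + s *: (v - u)) <= r.
Proof.
move=> ur vr /andP[s0 s1].
have -> : u + s *: (v - u) = (1 - s) *: u + s *: v.
  by apply/rowP => i; rewrite !mxE; ring.
apply: le_trans (enormD _ _) _.
rewrite !enormZ ger0_norm ?subr_ge0 // ger0_norm //.
have s1' : 0 <= 1 - s by rewrite subr_ge0.
have := ler_wpM2l s0 vr; have := ler_wpM2l s1' ur; lra.
Qed.

End Euclid.

Section Gradient.
Variables (R : realType) (n : nat) (f : 'rV[R]_n -> R) (g : 'rV[R]_n -> 'rV[R]_n).
Hypothesis f_grad : is_gradient f g.

Lemma grad_quotient_cvg x v :
  (fun h => h^-1 * (f (x + h *: v) - f x)) @ 0^'+ --> dotp (g x) v.
Proof.
have [fx dfx] := f_grad x; rewrite -dfx -deriveE //.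
apply: cvg_dnbhs_at_right.
have -> : (fun h => h^-1 * (f (x + h *: v) - f x)) =
          (fun h => h^-1 *: ((f \o shift x) (h *: v) - f x)).
  by apply/funext => h; rewrite /= /shift [h *: v + x]addrC.
exact: diff_derivable fx.
Qed.

Lemma grad_argmin xs : argmin f xs -> g xs = 0.
Proof.
move=> xs_min; apply/eqP; rewrite -enorm_eq0 -sqrf_eq0 eq_le sqr_ge0 andbT.
rewrite enorm_sqr -oppr_ge0 -dotpNr.
apply: cvgr_to_ge (@grad_quotient_cvg xs (- g xs)) _.
by near=> h; rewrite mulr_ge0 ?invr_ge0 ?subr_ge0 //; near: h; exact: nbhs_right_ge.
Unshelve. all: by end_near. Qed.

Hypothesis f_conv : econvex f.

Lemma convex_grad_ineq x y : f x + dotp (g x) (y - x) <= f y.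
Proof.
rewrite addrC -lerBrDr.
apply: cvgr_to_le (@grad_quotient_cvg x (y - x)) _.
near=> h.
have h01 : 0 <= h <= 1.
  by apply/andP; split; near: h; [exact: nbhs_right_ge | exact: nbhs_right_le].
have hp : 0 < h by near: h; exact: nbhs_right_gt.
rewrite ler_pdivrMl // lerBlDl.
have -> : x + h *: (y - x) = (1 - h) *: x + h *: y.
  by apply/rowP => i; rewrite !mxE; ring.
have [h0 h1] := andP h01.
by apply: le_trans (f_conv x y h0 h1) _; lra.
Unshelve. all: by end_near. Qed.

End Gradient.

Lemma le_of_le_add_harmonic (R : realType) (a b c : R) :
  (forall m : nat, a <= b + c * harmonic m) -> a <= b.
Proof.
move=> h; apply: (@cvgr_to_ge _ \oo _ _ (fun m => b + c * harmonic m)).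
  rewrite -[X in _ --> X]addr0 -(mulr0 c).
  by apply: cvgD; [exact: cvg_cst | apply: cvgM; [exact: cvg_cst | exact: cvg_harmonic]].
by near=> m; exact: h.
Unshelve. all: by end_near. Qed.

Section Descent.
Variables (R : realType) (n : nat) (f : 'rV[R]_n -> R) (g : 'rV[R]_n -> 'rV[R]_n).
Hypotheses (f_grad : is_gradient f g) (f_conv : econvex f).
Variables (W : set 'rV[R]_n) (L : R).
Hypothesis g_lip : elipschitz_on g W L.

Lemma convex_lipschitz_increment x u w : W x -> W u ->
  f u - f w <= dotp (g x) (u - w) + L * enorm (u - x) * enorm (u - w).
Proof.
move=> Wx Wu; have := convex_grad_ineq f_grad f_conv u w.
rewrite -opprB dotpNr => conv_u.
have := cauchy_schwarz (g u - g x) (u - w); rewrite dotpBl.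
have := ler_wpM2r (enorm_ge0 (u - w)) (g_lip Wu Wx); lra.
Qed.

Section Segment.
Variables (x y : 'rV[R]_n).
Hypothesis W_seg : forall t, 0 <= t <= 1 -> W (x + t *: (y - x)).

(* Riemann-sum form of the descent lemma; [M -> oo] gives [convex_descent]. *)
Lemma convex_descent_grid (M k : nat) : (0 < M)%N -> (k <= M)%N ->
  f (x + (k%:R / M%:R) *: (y - x)) - f x <= k%:R / M%:R * dotp (g x) (y - x)
    + L * enorm (y - x) ^+ 2 * (k%:R * k.+1%:R) / (2 * M%:R ^+ 2).
Proof.
move=> M_gt0; have M_gt0' : 0 < M%:R :> R by rewrite ltr0n.
set d := y - x; pose z (k : nat) := x + (k%:R / M%:R) *: d.
have Wz j : (j <= M)%N -> W (z j).
  by move=> jM; apply: W_seg; rewrite divr_ge0 // ler_pdivrMr // mul1r ler_nat.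
have z0 : z 0%N = x by rewrite /z mul0r scale0r addr0.
have Wx : W x by rewrite -z0; exact: Wz.
elim: k => [_|k IH kM]; first by rewrite -/(z 0%N) z0 subrr !(mul0r, mulr0, addr0).
have := @convex_lipschitz_increment x (z k.+1) (z k) Wx (Wz k.+1 kM).
have -> : z k.+1 - z k = M%:R^-1 *: d.
  by apply/rowP => i; rewrite !mxE -[k.+1%:R]natr1; field; rewrite gt_eqF.
have -> : z k.+1 - x = (k.+1%:R / M%:R) *: d by rewrite addrC addKr.
have Minv_ge0 : 0 <= M%:R^-1 :> R by rewrite invr_ge0 ler0n.
rewrite dotpZr !enormZ (ger0_norm Minv_ge0) ger0_norm ?divr_ge0 ?ler0n //.
have -> : k.+1%:R / M%:R * dotp (g x) d
      + L * enorm d ^+ 2 * (k.+1%:R * k.+2%:R) / (2 * M%:R ^+ 2)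
    = k%:R / M%:R * dotp (g x) d + L * enorm d ^+ 2 * (k%:R * k.+1%:R) / (2 * M%:R ^+ 2)
      + (M%:R^-1 * dotp (g x) d + L * (k.+1%:R / M%:R * enorm d) * (M%:R^-1 * enorm d)).
  by rewrite -[k.+2%:R]natr1 -[k.+1%:R]natr1; field; rewrite gt_eqF.
by move=> step; have := lerD (IH (ltnW kM)) step; rewrite addrC addrA subrK.
Qed.

Lemma convex_descent :
  f y <= f x + dotp (g x) (y - x) + L / 2 * enorm (y - x) ^+ 2.
Proof.
apply: (@le_of_le_add_harmonic _ _ _ (L / 2 * enorm (y - x) ^+ 2)) => m.
have M_gt0 : 0 < m.+1%:R :> R by rewrite ltr0n.
have := convex_descent_grid (ltn0Sn m) (leqnn m.+1).
rewrite divff ?gt_eqF // scale1r mul1r [x + _]addrC subrK.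
have -> : L * enorm (y - x) ^+ 2 * (m.+1%:R * m.+2%:R) / (2 * m.+1%:R ^+ 2)
    = L / 2 * enorm (y - x) ^+ 2 + L / 2 * enorm (y - x) ^+ 2 * harmonic m.
  by rewrite /harmonic /= -[m.+2%:R]natr1; field; rewrite gt_eqF.
by rewrite lerBlDl !addrA.
Qed.

End Segment.

End Descent.

Section AdaSGA.
Variables (R : realType) (n : nat) (g : 'rV[R]_n -> 'rV[R]_n) (x : nat -> 'rV[R]_n)
  (alpha theta gamma : nat -> R) (tau omega : R).
Hypotheses (alpha0_gt0 : 0 < alpha 0) (theta0_gt0 : 0 < theta 0) (tau_ge1 : 1 <= tau)
  (omega_gt0 : 0 < omega) (omega_sqr_le : omega ^+ 2 <= 1 / 2)
  (gamma_gt0 : forall k, 0 < gamma k).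
Hypothesis alpha_rule : forall k, (1 <= k)%N ->
  alpha k = adasga_alpha g x alpha theta gamma tau omega k.
Hypothesis theta_rule : forall k, (1 <= k)%N ->
  theta k = alpha k * gamma k / (alpha k.-1 * gamma k.-1).

Local Notation lam k := (alpha k * gamma k).
Local Notation growth k := (2 * (1 - omega ^+ 2) + theta k / tau).

Lemma omega_sqr_lt1 : 0 < 1 - omega ^+ 2.
Proof. by move: omega_sqr_le; lra. Qed.

Lemma growth_ge1 k : 0 < theta k -> 1 <= growth k.
Proof.
move=> theta_gt0; have : 0 <= theta k / tau.
  by rewrite divr_ge0 // ltW // (lt_le_trans ltr01 tau_ge1).
move: omega_sqr_le; lra.
Qed.

Lemma sqrt_growth_ge1 k : 0 < theta k -> 1 <= Num.sqrt (growth k).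
Proof. by move=> theta_gt0; rewrite -[X in X <= _]sqrtr1 ler_wsqrtr // growth_ge1. Qed.

Lemma Lk_ge0 k : 0 <= Lk g x k.
Proof. by rewrite divr_ge0 // enorm_ge0. Qed.

Lemma alpha_le_growth k :
  alpha k.+1 <= alpha k * gamma k / gamma k.+1 * Num.sqrt (growth k).
Proof. by rewrite alpha_rule //= /adasga_alpha /=; case: ifP => _ //; rewrite ge_min lexx. Qed.

Lemma alpha_le_lipschitz k : Lk g x k.+1 != 0 ->
  alpha k.+1 <= omega / (gamma k.+1 * Lk g x k.+1).
Proof. by move=> L_neq0; rewrite alpha_rule //= /adasga_alpha /= (negbTE L_neq0) ge_min lexx orbT. Qed.

Lemma alpha_theta_gt0 k : 0 < alpha k /\ 0 < theta k.
Proof.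
elim: k => [//|k [alpha_gt0 theta_gt0]].
have growth_gt0 : 0 < alpha k * gamma k / gamma k.+1 * Num.sqrt (growth k).
  by rewrite !mulr_gt0 ?invr_gt0 // (lt_le_trans ltr01) // sqrt_growth_ge1.
have alpha_gt0' : 0 < alpha k.+1.
  rewrite alpha_rule // /adasga_alpha /=; case: ifP => // /negbT L_neq0.
  by rewrite lt_min growth_gt0 divr_gt0 // mulr_gt0 // lt_def L_neq0 Lk_ge0.
by split=> //; rewrite theta_rule //= divr_gt0 ?mulr_gt0.
Qed.

Lemma alpha_gt0 k : 0 < alpha k. Proof. by case: (alpha_theta_gt0 k). Qed.
Lemma theta_gt0 k : 0 < theta k. Proof. by case: (alpha_theta_gt0 k). Qed.
Lemma lam_gt0 k : 0 < lam k. Proof. by rewrite mulr_gt0 ?alpha_gt0. Qed.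

Lemma growth_bound_scaled k :
  alpha k * gamma k / gamma k.+1 * Num.sqrt (growth k) * gamma k.+1
  = lam k * Num.sqrt (growth k).
Proof. by field; rewrite gt_eqF. Qed.

Lemma lam_growth k : lam k.+1 <= lam k * Num.sqrt (growth k).
Proof. by rewrite -growth_bound_scaled ler_wpM2r ?(ltW (gamma_gt0 _)) ?alpha_le_growth. Qed.

Lemma theta_lam_le k : theta k.+1 * lam k.+1 <= lam k * (2 * (1 - omega ^+ 2) + theta k).
Proof.
have lam_k := lam_gt0 k; have theta_k := theta_gt0 k.
have theta_k1 : theta k.+1 = lam k.+1 / lam k by rewrite theta_rule.
have : theta k.+1 ^+ 2 <= growth k.
  rewrite -(@sqr_sqrtr _ (growth k)); last exact: le_trans ler01 (growth_ge1 theta_k).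
  rewrite ler_pXn2r ?nnegrE ?(ltW (theta_gt0 _)) // theta_k1 ler_pdivrMr // [_ * lam k]mulrC.
  exact: lam_growth.
have : theta k / tau <= theta k.
  by rewrite ler_pdivrMr ?(lt_le_trans ltr01 tau_ge1) // ler_peMr // ltW.
have -> : theta k.+1 * lam k.+1 = lam k * theta k.+1 ^+ 2.
  by rewrite theta_k1; field; rewrite !gt_eqF ?alpha_gt0.
move=> tau_le sq_le; rewrite ler_pM2l //; lra.
Qed.

Lemma lam_lipschitz k :
  lam k.+1 * enorm (g (x k.+1) - g (x k)) <= omega * enorm (x k.+1 - x k).
Proof.
have dx_ge0 := enorm_ge0 (x k.+1 - x k).
have [L0|L_neq0] := eqVneq (Lk g x k.+1) 0.
  suff -> : enorm (g (x k.+1) - g (x k)) = 0 by rewrite mulr0 mulr_ge0 // ltW.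
  move/eqP: L0; rewrite mulf_eq0 invr_eq0 => /orP[/eqP //|].
  by rewrite enorm_eq0 subr_eq0 => /eqP ->; apply/eqP; rewrite subrr enorm_eq0.
have dx_neq0 : enorm (x k.+1 - x k) != 0.
  by apply: contraNneq L_neq0 => dx0; rewrite /Lk /= dx0 invr0 mulr0.
have dg_neq0 : enorm (g (x k.+1) - g (x k)) != 0.
  by apply: contraNneq L_neq0 => dg0; rewrite /Lk /= dg0 mul0r.
have : lam k.+1 <= omega / Lk g x k.+1.
  have -> : omega / Lk g x k.+1 = omega / (gamma k.+1 * Lk g x k.+1) * gamma k.+1.
    by field; rewrite L_neq0 gt_eqF.
  by rewrite ler_wpM2r ?(ltW (gamma_gt0 _)) ?alpha_le_lipschitz.
move=> /(ler_wpM2r (enorm_ge0 (g (x k.+1) - g (x k)))) /le_trans; apply.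
by rewrite le_eqVlt /Lk /=; apply/orP; left; apply/eqP; field; rewrite dx_neq0 dg_neq0.
Qed.

Lemma lam_next_ge_min k (L : R) : 0 < L -> Lk g x k.+1 <= L ->
  Num.min (lam k) (omega / L) <= lam k.+1.
Proof.
move=> L_gt0 Lk_le.
have lam_le : lam k <= alpha k * gamma k / gamma k.+1 * Num.sqrt (growth k) * gamma k.+1.
  by rewrite growth_bound_scaled ler_peMr ?(ltW (lam_gt0 k)) ?sqrt_growth_ge1 ?theta_gt0.
rewrite [alpha k.+1]alpha_rule // /adasga_alpha /=; case: ifP => [_|/negbT L_neq0].
  by rewrite ge_min lam_le.
have Lk_gt0 : 0 < Lk g x k.+1 by rewrite lt_def L_neq0 Lk_ge0.
have lip_le : omega / L <= omega / (gamma k.+1 * Lk g x k.+1) * gamma k.+1.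
  have -> : omega / (gamma k.+1 * Lk g x k.+1) * gamma k.+1 = omega / Lk g x k.+1.
    by field; rewrite L_neq0 gt_eqF.
  by rewrite ler_pM2l // lef_pV2 ?posrE.
by rewrite minr_pMl ?(ltW (gamma_gt0 _)) // le_min2.
Qed.

Section Lyapunov.
Variables (f : 'rV[R]_n -> R) (fstar : R).
Hypotheses (f_grad : is_gradient f g) (f_conv : econvex f).
Hypotheses (argmin_neq0 : argmin f !=set0)
  (fstar_argmin : forall z, argmin f z -> f z = fstar).
Hypothesis x_step : forall k, x k.+1 = x k - lam k *: g (x k).

Definition gap k := f (x k) - fstar.
Definition grad_energy k := lam k ^+ 2 * enorm (g (x k)) ^+ 2.
Definition lam_sum k := \sum_(1 <= i < k.+1) lam i.
Definition cw := (1 - omega ^+ 2)^-1.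
Definition gap_coef k := lam k * (2 + cw * theta k).

(* For [B = 0] this is the Lyapunov function of the analysis; shifting the gaps by a lower
   bound [B] makes its decrease telescope into the term [2 B lam_sum k]. *)
Definition lyap xs B k := enorm (x k.+1 - xs) ^+ 2 + cw * omega ^+ 2 * grad_energy k
  + gap_coef k * (gap k - B) + 2 * B * lam_sum k.

Definition eta_at xs :=
  enorm (x 0 - xs) ^+ 2 + 2 * grad_energy 0 + 2 * lam 0 * theta 0 * gap 0.

Lemma fstar_le y : fstar <= f y.
Proof. by case: argmin_neq0 => z z_min; rewrite -(fstar_argmin z_min). Qed.

Lemma gap_ge0 k : 0 <= gap k.
Proof. by rewrite subr_ge0 fstar_le. Qed.

Lemma grad_energy_ge0 k : 0 <= grad_energy k.
Proof. by rewrite mulr_ge0 ?sqr_ge0. Qed.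

Lemma lam_sum0 : lam_sum 0 = 0.
Proof. by rewrite /lam_sum big_geq. Qed.

Lemma lam_sumS k : lam_sum k.+1 = lam_sum k + lam k.+1.
Proof. by rewrite /lam_sum big_nat_recr. Qed.

Lemma cw_gt0 : 0 < cw.
Proof. by rewrite invr_gt0 omega_sqr_lt1. Qed.

Lemma cw_le2 : cw <= 2.
Proof. by rewrite -[2]invrK lef_pV2 ?posrE ?omega_sqr_lt1 //; move: omega_sqr_le; lra. Qed.

Lemma cw_omega_sqr a : cw * omega ^+ 2 * a = cw * a - a.
Proof. by rewrite /cw; field; rewrite gt_eqF ?omega_sqr_lt1. Qed.

Lemma gap_coef_ge0 k : 0 <= gap_coef k.
Proof. by apply/ltW; rewrite mulr_gt0 ?lam_gt0 // addr_gt0 // mulr_gt0 ?cw_gt0 ?theta_gt0. Qed.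

Lemma gap_coef_next k : cw * theta k.+1 * lam k.+1 <= gap_coef k.
Proof.
have -> : gap_coef k = cw * (lam k * (2 * (1 - omega ^+ 2) + theta k)).
  by rewrite /gap_coef /cw; field; rewrite gt_eqF ?omega_sqr_lt1.
by rewrite -mulrA ler_wpM2l ?(ltW cw_gt0) ?theta_lam_le.
Qed.

Lemma x_stepB k : x k.+1 - x k = - (lam k *: g (x k)).
Proof. by rewrite x_step addrAC subrr add0r. Qed.

Lemma dist_step xs k : argmin f xs ->
  enorm (x k.+1 - xs) ^+ 2 <= enorm (x k - xs) ^+ 2 - 2 * lam k * gap k + grad_energy k.
Proof.
move=> xs_min; have := convex_grad_ineq f_grad f_conv (x k) xs.
rewrite (fstar_argmin xs_min) -opprB dotpNr dotpC => conv.
have -> : x k.+1 - xs = (x k - xs) - lam k *: g (x k) by rewrite x_step addrAC.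
rewrite (enorm_sqrB (x k - xs)) dotpZr enorm_sqrZ /grad_energy /gap.
have : lam k * (f (x k) - fstar) <= lam k * dotp (x k - xs) (g (x k)).
  by rewrite ler_pM2l ?lam_gt0 //; lra.
lra.
Qed.

Lemma grad_energy_step k : grad_energy k.+1
  <= omega ^+ 2 * grad_energy k + theta k.+1 * lam k.+1 * (gap k - gap k.+1).
Proof.
set l := lam k; set l' := lam k.+1; set G := g (x k); set G' := g (x k.+1).
have l_gt0 : 0 < l := lam_gt0 k.
have lip : l' ^+ 2 * enorm (G' - G) ^+ 2 <= omega ^+ 2 * (l ^+ 2 * enorm G ^+ 2).
  have := lam_lipschitz k; rewrite x_stepB enormN enormZ gtr0_norm // -/l' -/G -/G' => lip.
  have lip_ge0 : 0 <= l' * enorm (G' - G) by rewrite mulr_ge0 ?enorm_ge0 // ltW ?lam_gt0.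
  by have := ler_pM lip_ge0 lip_ge0 lip lip; rewrite -!expr2 !exprMn mulrA.
have conv1 := convex_grad_ineq f_grad f_conv (x k.+1) (x k).
rewrite -opprB x_stepB opprK dotpZr -/l -/G -/G' in conv1.
have conv2 := convex_grad_ineq f_grad f_conv (x k) (x k.+1).
rewrite x_stepB dotpNr dotpZr -/l -/G -enorm_sqr in conv2.
set r := l' ^+ 2 / l.
have r_ge0 : 0 <= r by rewrite divr_ge0 ?sqr_ge0 // ltW.
have -> : theta k.+1 * l' = r by rewrite theta_rule //= -/l -/l' /r; field; rewrite gt_eqF.
have up : l' ^+ 2 * dotp G' G <= r * (gap k - gap k.+1).
  have -> : l' ^+ 2 * dotp G' G = r * (l * dotp G' G) by rewrite /r; field; rewrite gt_eqF.
  by rewrite ler_wpM2l // /gap; lra.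
have low : r * (gap k - gap k.+1) <= l' ^+ 2 * enorm G ^+ 2.
  have -> : l' ^+ 2 * enorm G ^+ 2 = r * (l * enorm G ^+ 2) by rewrite /r; field; rewrite gt_eqF.
  by rewrite ler_wpM2l // /gap; lra.
have -> : grad_energy k.+1
    = l' ^+ 2 * enorm (G' - G) ^+ 2 + 2 * (l' ^+ 2 * dotp G' G) - l' ^+ 2 * enorm G ^+ 2.
  by rewrite /grad_energy -/l' -/G' enorm_sqrB; ring.
rewrite /grad_energy -/l -/G; lra.
Qed.

Lemma lyap_next xs B k : argmin f xs ->
  lyap xs B k.+1 <= enorm (x k.+1 - xs) ^+ 2 + cw * omega ^+ 2 * grad_energy k
    + cw * theta k.+1 * lam k.+1 * (gap k - B) + 2 * B * lam_sum k.
Proof.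
move=> xs_min; have dist := dist_step k.+1 xs_min.
have energy := ler_wpM2l (ltW cw_gt0) (grad_energy_step k).
have := cw_omega_sqr (grad_energy k.+1).
rewrite /lyap /gap_coef lam_sumS; lra.
Qed.

Lemma lyap_decr xs B k : argmin f xs -> B <= gap k -> lyap xs B k.+1 <= lyap xs B k.
Proof.
move=> xs_min B_le; apply: le_trans (lyap_next B k xs_min) _.
have gapB_ge0 : 0 <= gap k - B by rewrite subr_ge0.
have := ler_wpM2r gapB_ge0 (gap_coef_next k).
rewrite /lyap; lra.
Qed.

Lemma lyap_first xs B : argmin f xs -> 0 <= B -> lyap xs B 1 <= lyap xs 0 0.
Proof.
move=> xs_min B_ge0; apply: le_trans (lyap_next B 0 xs_min) _.
have coef_ge0 := ltW (mulr_gt0 (mulr_gt0 cw_gt0 (theta_gt0 1)) (lam_gt0 1)).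
have := ler_wpM2r (gap_ge0 0) (gap_coef_next 0).
have := mulr_ge0 coef_ge0 B_ge0.
rewrite /lyap lam_sum0; lra.
Qed.

Lemma lyap0_le xs : argmin f xs -> lyap xs 0 0 <= eta_at xs.
Proof.
move=> xs_min; have dist := dist_step 0 xs_min.
have := cw_omega_sqr (grad_energy 0).
have := ler_wpM2r (grad_energy_ge0 0) cw_le2.
have qt_ge0 := mulr_ge0 (ltW (mulr_gt0 (theta_gt0 0) (lam_gt0 0))) (gap_ge0 0).
have := ler_wpM2r qt_ge0 cw_le2.
rewrite /lyap /eta_at /gap_coef lam_sum0; lra.
Qed.

Lemma lyap_le_eta xs B N : argmin f xs -> 0 <= B ->
  (forall k, (1 <= k <= N)%N -> B <= gap k) -> lyap xs B N.+1 <= eta_at xs.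
Proof.
move=> xs_min B_ge0; elim: N => [_|N IH gap_ge].
  exact: le_trans (lyap_first xs_min B_ge0) (lyap0_le xs_min).
have gap_N : B <= gap N.+1 by apply: gap_ge; rewrite /= leqnn.
apply: le_trans (lyap_decr xs_min gap_N) (IH _) => k /andP[k1 kN].
by apply: gap_ge; rewrite k1 ltnW.
Qed.

Lemma lyap_ge xs B k : B <= gap k ->
  enorm (x k.+1 - xs) ^+ 2 + 2 * B * lam_sum k <= lyap xs B k.
Proof.
move=> B_le; have gapB_ge0 : 0 <= gap k - B by rewrite subr_ge0.
have := mulr_ge0 (gap_coef_ge0 k) gapB_ge0.
have := mulr_ge0 (mulr_ge0 (ltW cw_gt0) (sqr_ge0 omega)) (grad_energy_ge0 k).
rewrite /lyap; lra.
Qed.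

Lemma gap_sum_bound xs B N : argmin f xs -> 0 <= B ->
  (forall k, (1 <= k <= N)%N -> B <= gap k) ->
  enorm (x N.+1 - xs) ^+ 2 + 2 * B * lam_sum N <= eta_at xs.
Proof.
move=> xs_min B_ge0; case: N => [_|N gap_ge].
  rewrite lam_sum0 mulr0 -(mul0r (lam_sum 0)) -(mulr0 2).
  exact: le_trans (lyap_ge xs (gap_ge0 0)) (lyap0_le xs_min).
apply: le_trans (lyap_ge xs (gap_ge N.+1 _)) (lyap_le_eta xs_min B_ge0 _) => [|k /andP[k1 kN]].
  by rewrite /= leqnn.
by apply: gap_ge; rewrite k1 leqW.
Qed.

Lemma dist_le_eta xs k : argmin f xs -> enorm (x k - xs) ^+ 2 <= eta_at xs.
Proof.
move=> xs_min; case: k => [|k].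
  have := mulr_ge0 (ltW (mulr_gt0 (theta_gt0 0) (lam_gt0 0))) (gap_ge0 0).
  have := grad_energy_ge0 0; rewrite /eta_at; lra.
have := gap_sum_bound (N := k) xs_min (lexx 0) (fun k _ => gap_ge0 k).
by rewrite mulr0 mul0r addr0.
Qed.

Section Bounded.
Variables (eta Rad : R).
Hypothesis eta_def : eta = dist_to (x 0) (argmin f) ^+ 2
  + 2 * alpha 0 ^+ 2 * gamma 0 ^+ 2 * enorm (g (x 0)) ^+ 2
  + 2 * alpha 0 * gamma 0 * theta 0 * (f (x 0) - fstar).
Hypothesis Rad_gt : Num.sqrt eta + dist_to (x 0) (argmin f) + enorm (x 0) < Rad.

Local Notation dist0 := (dist_to (x 0) (argmin f)).

Lemma dist0_has_inf : has_inf [set enorm (z - x 0) | z in argmin f].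
Proof.
split; first by case: argmin_neq0 => z z_min; exists (enorm (z - x 0)), z.
by exists 0 => _ [z _ <-]; exact: enorm_ge0.
Qed.

Lemma dist0_ge0 : 0 <= dist0.
Proof.
apply: lb_le_inf; first by case: dist0_has_inf.
by move=> _ [z _ <-]; exact: enorm_ge0.
Qed.

Lemma dist0_le xs : argmin f xs -> dist0 <= enorm (xs - x 0).
Proof. by move=> xs_min; apply: (ge_inf (proj2 dist0_has_inf)); exists xs. Qed.

(* The infimum [dist0] need not be attained a priori: we use minimizers whose distance to
   [x 0] is almost [dist0], the strict inequality [Rad_gt] leaving the necessary room. *)
Lemma near_minimizer e : 0 < e ->
  exists2 xs, argmin f xs & enorm (xs - x 0) ^+ 2 <= dist0 ^+ 2 + e.
Proof.
move=> e_gt0; have d_ge0 := dist0_ge0.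
set eps := Num.min 1 (e / (2 * dist0 + 1)).
have eps_gt0 : 0 < eps by rewrite lt_min ltr01 divr_gt0 //; lra.
have eps_le1 : eps <= 1 by rewrite ge_min lexx.
have eps_le : eps * (2 * dist0 + 1) <= e.
  by rewrite -ler_pdivlMr ?ge_min ?lexx ?orbT //; lra.
have [_ [xs xs_min <-] close] := inf_adherent eps_gt0 dist0_has_inf.
exists xs => //; have := dist0_le xs_min.
have := ler_pM (enorm_ge0 (xs - x 0)) (enorm_ge0 (xs - x 0)) (ltW close) (ltW close).
have := ler_wpM2l (ltW eps_gt0) eps_le1.
rewrite -expr2; lra.
Qed.

Lemma eta_at_eq xs : eta_at xs = eta + (enorm (xs - x 0) ^+ 2 - dist0 ^+ 2).
Proof. by rewrite eta_def /eta_at /grad_energy /gap enormB exprMn; ring. Qed.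

Lemma eta_ge0 : 0 <= eta.
Proof.
have := mulr_ge0 (ltW (mulr_gt0 (theta_gt0 0) (lam_gt0 0))) (gap_ge0 0).
have := grad_energy_ge0 0; have := sqr_ge0 dist0.
rewrite eta_def /grad_energy /gap exprMn; lra.
Qed.

Lemma minimizer_with_margin e : 0 < e -> exists xs, [/\ argmin f xs, eta_at xs <= eta + e &
  Num.sqrt (eta_at xs) + enorm (xs - x 0) + enorm (x 0) < Rad].
Proof.
move=> e_gt0; set M := Rad - (Num.sqrt eta + dist0 + enorm (x 0)).
have M_gt0 : 0 < M by rewrite subr_gt0.
set e' := Num.min e ((M / 3) ^+ 2).
have e'_gt0 : 0 < e' by rewrite lt_min e_gt0 exprn_gt0 ?divr_gt0.
have sqrt_e' : Num.sqrt e' <= M / 3.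
  by rewrite -(ger0_norm (ltW (divr_gt0 M_gt0 _))) // -sqrtr_sqr ler_wsqrtr // ge_min lexx orbT.
have [xs xs_min close] := near_minimizer e'_gt0.
have eta_ge0 := eta_ge0.
have eta_at_le : eta_at xs <= eta + e' by rewrite eta_at_eq; lra.
exists xs; split => //; first by apply: le_trans eta_at_le _; rewrite lerD2l ge_min lexx.
have e'_ge0 := ltW e'_gt0.
have : Num.sqrt (eta_at xs) <= Num.sqrt eta + Num.sqrt e'.
  exact: le_trans (ler_wsqrtr eta_at_le) (sqrtrD_le eta_ge0 e'_ge0).
have : enorm (xs - x 0) <= dist0 + Num.sqrt e'.
  apply: le_trans (ler_sqrt_sqr (enorm_ge0 _) close) _.
  by rewrite -{2}(ger0_norm dist0_ge0) -sqrtr_sqr sqrtrD_le ?sqr_ge0.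
by rewrite /M in sqrt_e'; have := Rad_gt; lra.
Qed.

Lemma iterate_in_ball k : ecball 0 Rad (x k).
Proof.
have [xs [xs_min _ margin]] := minimizer_with_margin ltr01.
have := ler_sqrt_sqr (enorm_ge0 _) (dist_le_eta k xs_min).
have := enormD (x k - xs) (xs - x 0); have := enormD (x k - xs + (xs - x 0)) (x 0).
rewrite /ecball /= subr0 !addrA !subrK; lra.
Qed.

Lemma minimizer_in_ball e : 0 < e ->
  exists xs, [/\ argmin f xs, ecball 0 Rad xs & eta_at xs <= eta + e].
Proof.
move=> e_gt0; have [xs [xs_min eta_le margin]] := minimizer_with_margin e_gt0.
exists xs; split => //; rewrite /ecball /= subr0.
have := enormD (xs - x 0) (x 0); have := sqrtr_ge0 (eta_at xs).
rewrite subrK; lra.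
Qed.

Lemma iterate_segment_in_ball k t : 0 <= t <= 1 ->
  ecball 0 Rad (x k + t *: (x k.+1 - x k)).
Proof.
move=> t01; rewrite /ecball /= subr0.
by apply: enorm_segment_le t01; rewrite -(subr0 (x _)); exact: iterate_in_ball.
Qed.

Variable LW : R.
Hypotheses (LW_gt0 : 0 < LW) (g_lip : elipschitz_on g (ecball 0 Rad) LW).

Lemma descent_along_step k t : 0 <= t <= lam k ->
  f (x k - t *: g (x k)) <= f (x k) - t * enorm (g (x k)) ^+ 2
    + LW / 2 * (t ^+ 2 * enorm (g (x k)) ^+ 2).
Proof.
move=> /andP[t_ge0 t_le]; have lam_k := lam_gt0 k.
have seg u : 0 <= u <= 1 -> ecball 0 Rad (x k + u *: (x k - t *: g (x k) - x k)).
  case/andP=> u_ge0 u_le1.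
  have -> : x k + u *: (x k - t *: g (x k) - x k) = x k + (u * t / lam k) *: (x k.+1 - x k).
    by rewrite x_stepB addrAC subrr add0r !scalerN !scalerA mulfVK ?gt_eqF.
  apply: iterate_segment_in_ball; rewrite divr_ge0 ?(mulr_ge0 u_ge0 t_ge0) ?(ltW lam_k) //=.
  by rewrite ler_pdivrMr // mul1r -[X in _ <= X]mul1r ler_pM.
have := convex_descent f_grad f_conv g_lip seg.
have -> : x k - t *: g (x k) - x k = - (t *: g (x k)) by rewrite addrAC subrr add0r.
by rewrite dotpNr dotpZr enormN enorm_sqrZ -enorm_sqr.
Qed.

Lemma grad_sqr_le_gap k : LW^-1 <= lam k -> enorm (g (x k)) ^+ 2 <= 2 * LW * gap k.
Proof.
move=> lam_ge; have inv_ge0 : 0 <= LW^-1 by rewrite invr_ge0 ltW.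
have := descent_along_step (k := k) (t := LW^-1); rewrite inv_ge0 lam_ge => /(_ isT).
have := fstar_le (x k - LW^-1 *: g (x k)); set G := enorm _ ^+ 2.
have -> : LW / 2 * (LW^-1 ^+ 2 * G) = LW^-1 * G / 2 by field; rewrite gt_eqF.
rewrite /gap -ler_pdivrMl ?mulr_gt0 //; lra.
Qed.

Lemma gap_decrease k : lam k <= LW^-1 ->
  gap k.+1 <= gap k - lam k * enorm (g (x k)) ^+ 2 / 2.
Proof.
move=> lam_le; have lam_k := lam_gt0 k.
have := descent_along_step (k := k) (t := lam k); rewrite ltW // lexx -x_step => /(_ isT).
have : LW * lam k <= 1 by rewrite -ler_pdivlMl // mulr1.
set G := enorm _ ^+ 2; have G_ge0 : 0 <= lam k * G by rewrite mulr_ge0 ?sqr_ge0 ?ltW.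
move=> /(ler_wpM2r G_ge0); rewrite /gap; lra.
Qed.

Lemma gap_le_dist xs k : argmin f xs -> ecball 0 Rad xs ->
  gap k <= LW / 2 * enorm (x k - xs) ^+ 2.
Proof.
move=> xs_min xs_ball.
have seg t : 0 <= t <= 1 -> ecball 0 Rad (xs + t *: (x k - xs)).
  move=> t01; rewrite /ecball /= subr0; apply: enorm_segment_le t01.
    by rewrite -(subr0 xs).
  by rewrite -(subr0 (x k)); exact: iterate_in_ball.
have := convex_descent f_grad f_conv g_lip seg.
by rewrite (grad_argmin f_grad xs_min) dotp0l addr0 (fstar_argmin xs_min) enormB /gap lerBlDl.
Qed.

Lemma small_gap_step m G : G <= enorm (g (x m)) ^+ 2 -> 2 * LW * gap m < G ->
  gap m.+1 + G / 2 * lam m <= gap m.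
Proof.
move=> G_le gap_lt; have lam_m := lam_gt0 m.
have lam_le : lam m <= LW^-1.
  by rewrite leNgt; apply/negP => /ltW /grad_sqr_le_gap; lra.
have := gap_decrease lam_le; have := ler_wpM2l (ltW lam_m) G_le; lra.
Qed.

Lemma small_gap_tail j i G : 0 <= G -> 2 * LW * gap j < G ->
  (forall m, (j <= m < j + i)%N -> G <= enorm (g (x m)) ^+ 2) ->
  gap (j + i) + G / 2 * \sum_(j <= m < j + i) lam m <= gap j.
Proof.
move=> G_ge0 gap_j; elim: i => [_|i IH G_le].
  by rewrite addn0 big_geq // mulr0 addr0.
have {}IH : gap (j + i) + G / 2 * \sum_(j <= m < j + i) lam m <= gap j.
  by apply: IH => m /andP[jm mi]; apply: G_le; rewrite jm addnS ltnS ltnW.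
have sum_ge0 : 0 <= G / 2 * \sum_(j <= m < j + i) lam m.
  by rewrite mulr_ge0 ?divr_ge0 // sumr_ge0 // => m _; exact: ltW (lam_gt0 m).
have step : gap (j + i).+1 + G / 2 * lam (j + i) <= gap (j + i).
  apply: small_gap_step; first by apply: G_le; rewrite leq_addr addnS ltnS /=.
  by move: gap_j IH sum_ge0; have := LW_gt0; nra.
by rewrite addnS big_nat_recr ?leq_addr //=; lra.
Qed.

Lemma grad_sum_bound xs N G : argmin f xs -> ecball 0 Rad xs -> 0 <= G ->
  (forall k, (1 <= k <= N)%N -> G <= enorm (g (x k)) ^+ 2) ->
  G * lam_sum N <= LW * eta_at xs.
Proof.
move=> xs_min xs_ball G_ge0 G_le; set B := G / (2 * LW).
have B_ge0 : 0 <= B by rewrite divr_ge0 // mulr_ge0 // ltW.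
have G_eq : G = 2 * LW * B by rewrite /B; field; rewrite gt_eqF.
have [all_ge|[j jN [first_ge gap_lt]]] := all_ge_or_first_lt gap B N.
  have := gap_sum_bound xs_min B_ge0 all_ge.
  have := sqr_ge0 (enorm (x N.+1 - xs)); rewrite G_eq; have := LW_gt0; nra.
(* past the first index [j + 1] where the gap drops below [B], the steps are short and
   the gaps decrease by at least [G / 2] times the step sizes *)
have tail := small_gap_tail (j := j.+1) (i := N - j) G_ge0.
rewrite addSn subnKC ?(ltnW jN) // in tail.
have {}tail : gap N.+1 + G / 2 * \sum_(j.+1 <= m < N.+1) lam m <= gap j.+1.
  apply: tail => [|m /andP[jm mN]]; first by rewrite G_eq ltr_pM2l // mulr_gt0.
  by apply: G_le; rewrite (leq_ltn_trans (leq0n j) jm).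
have head := gap_sum_bound xs_min B_ge0 first_ge.
have near := gap_le_dist j.+1 xs_min xs_ball.
have sum_cat : lam_sum N = lam_sum j + \sum_(j.+1 <= m < N.+1) lam m.
  by rewrite /lam_sum (@big_cat_nat _ _ _ j.+1) // ltnS ltnW.
have := ler_wpM2l (ltW LW_gt0) head; have := gap_ge0 N.+1.
rewrite sum_cat G_eq in tail *; lra.
Qed.

Lemma Lk_le k : Lk g x k.+1 <= LW.
Proof.
rewrite /Lk /=; have [->|dx_neq0] := eqVneq (enorm (x k.+1 - x k)) 0.
  by rewrite invr0 mulr0 ltW.
rewrite ler_pdivrMr ?lt_def ?dx_neq0 ?enorm_ge0 //.
exact: g_lip (iterate_in_ball _) (iterate_in_ball _).
Qed.

Local Notation lam_min := (Num.min (lam 0) (omega / LW)).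

Lemma lam_ge_min k : lam_min <= lam k.
Proof.
elim: k => [|k IH]; first by rewrite ge_min lexx.
apply: le_trans (lam_next_ge_min LW_gt0 (Lk_le k)).
by rewrite le_min IH ge_min lexx orbT.
Qed.

Lemma lam_sum_ge N : N%:R * lam_min <= lam_sum N.
Proof.
elim: N => [|N IH]; first by rewrite mul0r lam_sum0.
by rewrite lam_sumS -natr1 mulrDl mul1r lerD ?lam_ge_min.
Qed.

Lemma min_rate_eq : Num.min (LW * alpha 0 * gamma 0) omega = LW * lam_min.
Proof. by rewrite minr_pMr ?(ltW LW_gt0) // mulrA mulrCA divff ?gt_eqF // mulr1. Qed.

Lemma grad_sum_le_eta N G : 0 <= G ->
  (forall k, (1 <= k <= N)%N -> G <= enorm (g (x k)) ^+ 2) -> G * lam_sum N <= LW * eta.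
Proof.
move=> G_ge0 G_le; apply/ler_addgt0Pr => e e_gt0.
have [xs [xs_min xs_ball eta_le]] := minimizer_in_ball (divr_gt0 e_gt0 LW_gt0).
apply: le_trans (grad_sum_bound xs_min xs_ball G_ge0 G_le) _.
have -> : LW * eta + e = LW * (eta + e / LW) by field; rewrite gt_eqF.
by rewrite ler_wpM2l ?(ltW LW_gt0).
Qed.

Lemma eta_at_le_ball xs : argmin f xs -> ecball 0 Rad xs ->
  eta_at xs <= (Rad + enorm (x 0)) ^+ 2 + eta.
Proof.
move=> xs_min; rewrite /ecball /= subr0 eta_at_eq => xs_le.
have d_le : enorm (xs - x 0) <= Rad + enorm (x 0).
  by apply: le_trans (enormD _ _) _; rewrite enormN lerD2r.
have := sqr_ge0 dist0; have d_ge0 := enorm_ge0 (xs - x 0).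
have := ler_pM d_ge0 d_ge0 d_le d_le; rewrite -!expr2; lra.
Qed.

Local Notation rate_min := (Num.min (LW * alpha 0 * gamma 0) omega).

Lemma rate_min_gt0 : 0 < rate_min.
Proof. by rewrite min_rate_eq mulr_gt0 // lt_min lam_gt0 divr_gt0. Qed.

Lemma grad_rate N : (1 <= N)%N -> exists k, [/\ (1 <= k)%N, (k <= N)%N &
  enorm (g (x k)) <= Num.sqrt (LW ^+ 2 * eta / (N%:R * rate_min))].
Proof.
move=> N_ge1; have [k /andP[k1 kN] k_min] := exists_min_index (fun k => enorm (g (x k)) ^+ 2) N_ge1.
exists k; split => //; apply: ler_sqrt_sqr (enorm_ge0 _) _.
set G := enorm _ ^+ 2 in k_min *; have G_ge0 : 0 <= G := sqr_ge0 _.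
have sum_le := le_trans (ler_wpM2l G_ge0 (lam_sum_ge N)) (grad_sum_le_eta G_ge0 k_min).
have := ler_wpM2l (ltW LW_gt0) sum_le.
rewrite ler_pdivlMr ?mulr_gt0 ?ltr0n ?rate_min_gt0 // min_rate_eq; lra.
Qed.

Lemma gap_rate N : (1 <= N)%N -> exists k, (k <= N)%N /\
  gap k <= LW * ((Rad + enorm (x 0)) ^+ 2 + eta) / (2 * N%:R * rate_min).
Proof.
move=> N_ge1; have [k /andP[_ kN] k_min] := exists_min_index gap N_ge1.
exists k; split => //.
have [xs [xs_min xs_ball _]] := minimizer_in_ball ltr01.
have sum_le := gap_sum_bound xs_min (gap_ge0 k) k_min.
have : 2 * (gap k * (N%:R * lam_min)) <= (Rad + enorm (x 0)) ^+ 2 + eta.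
  have := eta_at_le_ball xs_min xs_ball; have := ler_wpM2l (gap_ge0 k) (lam_sum_ge N).
  have := sqr_ge0 (enorm (x N.+1 - xs)); lra.
move=> /(ler_wpM2l (ltW LW_gt0)).
rewrite ler_pdivlMr ?mulr_gt0 ?ltr0n ?rate_min_gt0 // min_rate_eq; lra.
Qed.

Lemma grad_first_hit eps : 0 < eps -> exists Neps, [/\ enorm (g (x Neps)) <= eps,
  (forall j, (j < Neps)%N -> ~ (enorm (g (x j)) <= eps)) &
  (Neps%:Z <= Num.ceil (1 + LW ^+ 2 * eta / (eps ^+ 2 * rate_min)))%R].
Proof.
move=> eps_gt0; have m_gt0 := rate_min_gt0.
have C_ge0 : 0 <= LW ^+ 2 * eta / (eps ^+ 2 * rate_min).
  by rewrite divr_ge0 ?mulr_ge0 ?sqr_ge0 ?eta_ge0 // ltW.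
apply: (first_hit_le_ceil (P := fun k => enorm (g (x k)) <= eps) C_ge0) => N N_ge1 C_le.
have [k [_ kN k_le]] := grad_rate N_ge1; exists k => //; apply: le_trans k_le _.
rewrite -(ger0_norm (ltW eps_gt0)) -sqrtr_sqr ler_wsqrtr // ler_pdivrMr ?mulr_gt0 ?ltr0n //.
by move: C_le; rewrite ler_pdivrMr ?mulr_gt0 ?exprn_gt0 // => C_le; lra.
Qed.

Lemma gap_first_hit eps : 0 < eps -> exists Neps, [/\ gap Neps <= eps,
  (forall j, (j < Neps)%N -> ~ (gap j <= eps)) &
  (Neps%:Z <= Num.ceil (1 + LW * ((Rad + enorm (x 0)) ^+ 2 + eta) / (2 * eps * rate_min)))%R].
Proof.
move=> eps_gt0; have m_gt0 := rate_min_gt0.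
have C_ge0 : 0 <= LW * ((Rad + enorm (x 0)) ^+ 2 + eta) / (2 * eps * rate_min).
  by rewrite divr_ge0 ?mulr_ge0 ?addr_ge0 ?sqr_ge0 ?eta_ge0 // ltW.
apply: (first_hit_le_ceil (P := fun k => gap k <= eps) C_ge0) => N N_ge1 C_le.
have [k [kN k_le]] := gap_rate N_ge1; exists k => //; apply: le_trans k_le _.
rewrite ler_pdivrMr ?mulr_gt0 ?ltr0n //.
by move: C_le; rewrite ler_pdivrMr ?mulr_gt0 // => C_le; lra.
Qed.

Lemma adasga_complexity :
  let m := rate_min in
  ((forall N : nat, (1 <= N)%N ->
      exists k : nat, [/\ (1 <= k)%N, (k <= N)%N &
        enorm (g (x k)) <= Num.sqrt (LW ^+ 2 * eta / (N%:R * m))]) /\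
   (forall eps : R, 0 < eps ->
      exists Neps : nat, [/\ enorm (g (x Neps)) <= eps,
        (forall j : nat, (j < Neps)%N -> ~ (enorm (g (x j)) <= eps)) &
        (Neps%:Z <= Num.ceil (1 + LW ^+ 2 * eta / (eps ^+ 2 * m)))%R])) /\
  ((forall N : nat, (1 <= N)%N ->
      exists k : nat, (k <= N)%N /\
        f (x k) - fstar <= LW * ((Rad + enorm (x 0)) ^+ 2 + eta) / (2 * N%:R * m)) /\
   (forall eps : R, 0 < eps ->
      exists Neps : nat, [/\ f (x Neps) - fstar <= eps,
        (forall j : nat, (j < Neps)%N -> ~ (f (x j) - fstar <= eps)) &
        (Neps%:Z <= Num.ceil (1 + LW * ((Rad + enorm (x 0)) ^+ 2 + eta)
                                   / (2 * eps * m)))%R])).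
Proof.
split; split; [exact: grad_rate | exact: grad_first_hit | exact: gap_rate | exact: gap_first_hit].
Qed.

End Bounded.

End Lyapunov.

End AdaSGA.

Unset Implicit Arguments.

Theorem theorem4p4 (R : realType) (n : nat)
  (f : 'rV[R]_n -> R) (g : 'rV[R]_n -> 'rV[R]_n) (fstar : R)
  (x : nat -> 'rV[R]_n) (alpha theta gamma : nat -> R)
  (tau omega gmin gmax eta Rad LW : R) :
  econvex f ->
  is_gradient f g ->
  continuous g ->
  elocally_lipschitz g ->
  argmin f !=set0 ->
  (forall z, argmin f z -> f z = fstar) ->
  0 < alpha 0 -> 0 < theta 0 -> 1 <= tau ->
  0 < omega -> omega <= 1 / Num.sqrt 2 ->
  0 < gmin -> gmin <= gmax ->
  (forall k, gmin <= gamma k <= gmax) ->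
  (forall k, x k.+1 = x k - (alpha k * gamma k) *: g (x k)) ->
  (forall k, (1 <= k)%N ->
     alpha k = adasga_alpha g x alpha theta gamma tau omega k) ->
  (forall k, (1 <= k)%N ->
     theta k = alpha k * gamma k / (alpha k.-1 * gamma k.-1)) ->
  eta = dist_to (x 0) (argmin f) ^+ 2
        + 2 * alpha 0 ^+ 2 * gamma 0 ^+ 2 * enorm (g (x 0)) ^+ 2
        + 2 * alpha 0 * gamma 0 * theta 0 * (f (x 0) - fstar) ->
  Num.sqrt eta + dist_to (x 0) (argmin f) + enorm (x 0) < Rad ->
  0 < LW ->
  elipschitz_on g (ecball 0 Rad) LW ->
  let m := Num.min (LW * alpha 0 * gamma 0) omega in
  (* (a) *)
  ((forall N : nat, (1 <= N)%N ->
      exists k : nat, [/\ (1 <= k)%N, (k <= N)%N &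
        enorm (g (x k)) <= Num.sqrt (LW ^+ 2 * eta / (N%:R * m))]) /\
   (forall eps : R, 0 < eps ->
      exists Neps : nat, [/\ enorm (g (x Neps)) <= eps,
        (forall j : nat, (j < Neps)%N -> ~ (enorm (g (x j)) <= eps)) &
        (Neps%:Z <= Num.ceil (1 + LW ^+ 2 * eta / (eps ^+ 2 * m)))%R])) /\
  (* (b) *)
  ((forall N : nat, (1 <= N)%N ->
      exists k : nat, (k <= N)%N /\
        f (x k) - fstar <=
          LW * ((Rad + enorm (x 0)) ^+ 2 + eta) / (2 * N%:R * m)) /\
   (forall eps : R, 0 < eps ->
      exists Neps : nat, [/\ f (x Neps) - fstar <= eps,
        (forall j : nat, (j < Neps)%N -> ~ (f (x j) - fstar <= eps)) &
        (Neps%:Z <= Num.ceil (1 + LW * ((Rad + enorm (x 0)) ^+ 2 + eta)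
                                   / (2 * eps * m)))%R])).
Proof.
move=> f_conv f_grad _ _ argmin_neq0 fstar_argmin alpha0_gt0 theta0_gt0 tau_ge1
  omega_gt0 omega_le gmin_gt0 _ gamma_bnd x_step alpha_rule theta_rule eta_def Rad_gt
  LW_gt0 g_lip.
have gamma_gt0 k : 0 < gamma k by case/andP: (gamma_bnd k) => /(lt_le_trans gmin_gt0).
have omega_sqr_le : omega ^+ 2 <= 1 / 2.
  move: omega_le; rewrite -(ler_pXn2r (n := 2)) ?nnegrE ?divr_ge0 ?sqrtr_ge0 ?(ltW omega_gt0) //.
  by rewrite expr_div_n sqr_sqrtr // expr1n.
exact: (adasga_complexity alpha0_gt0 theta0_gt0 tau_ge1 omega_gt0 omega_sqr_le gamma_gt0
  alpha_rule theta_rule f_grad f_conv argmin_neq0 fstar_argmin x_step eta_def Rad_gt LW_gt0 g_lip).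
Qed.
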